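(* Let $n\geq 1$ and let $C$ be an all-ones CRC in $G_n$ with $\mathbf{0}\in C$ and $-e_n\in C$. Then: (1) for every slice pair $\{x,x-e_n\}$ there is $i\in\{0,\ldots,\rho\}$ with $x,x-e_n\in C_i$; (2) if an $n$-line contains words of $C_i$, then the words of $C_i$ on that line form a set invariant under translation by $\pm 4e_n$ and are a union of slice pairs; in particular every $n$-line is a union of slice pairs, which lie alternately in $C_i$ and $C_{i+1}$ for some $i\in\{0,\ldots,\rho-1\}$.
   Context: $G_n$: vertex set $\mathbb{Z}^n$, $x\sim y$ iff $\sum_i|x_i-y_i|=1$; $e_i$ is the $i$-th unit vector, $\mathbf{0}$ the all-zero word. For a code $C$ with covering radius $\rho$, $C_i=\{v:d(v,C)=i\}$. $C$ is a CRC if for all $i,j$ every vertex of $C_i$ has the same number $\alpha_{ij}$ of neighbours in $C_j$, with $\alpha_{ij}=0$ for $|i-j|>1$; $a_i=\alpha_{ii}$, $b_i=\alpha_{i,i+1}$, $c_i=\alpha_{i,i-1}$. $C$ is all-ones if $a_i=1$ for all $i=0,\ldots,\rho$. For $s\in\mathbb{Z}$, the $s$-slice is $\{x\in\mathbb{Z}^n: x_n\in\{2s,2s-1\}\}$; a slice pair is a pair $\{x,x-e_n\}$ with $x_n=2s$ for some $s$ (both in the $s$-slice). An $n$-line is a set $\{x+te_n:t\in\mathbb{Z}\}$. *)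

From Stdlib Require Import ClassicalEpsilon.
From mathcomp Require Import all_boot all_order all_algebra.
Set Implicit Arguments. Unset Strict Implicit. Unset Printing Implicit Defensive.
Import Order.TTheory GRing.Theory Num.Theory.
Local Open Scope ring_scope.

Definition pb (P : Prop) : bool :=
  if excluded_middle_informative P then true else false.

Definition pt (d : nat) := 'I_d -> int.

Definition dist d (x y : pt d) : nat := (\sum_(k < d) `|x k - y k|%N)%N.

(* C_i = { v : d(v,C) = i } for a (possibly infinite) code C *)
Definition in_Ci d (C : pt d -> Prop) (i : nat) (v : pt d) : Prop :=
  (exists c, C c /\ dist v c = i) /\ (forall c, C c -> (i <= dist v c)%N).

Definition nbr d (v : pt d) (p : 'I_d * bool) : pt d :=
  fun k => if k == p.1 then (if p.2 then v k + 1 else v k - 1) else v k.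

Definition nb_count d (C : pt d -> Prop) (v : pt d) (j : nat) : nat :=
  #|[pred p : 'I_d * bool | pb (in_Ci C j (nbr v p))]|.

Definition covering_radius d (C : pt d -> Prop) (rho : nat) : Prop :=
  (forall v, exists i, (i <= rho)%N /\ in_Ci C i v) /\ (exists v, in_Ci C rho v).

Definition is_CRC d (C : pt d -> Prop) (rho : nat) : Prop :=
  covering_radius C rho /\
  exists alpha : nat -> nat -> nat,
    (forall i j v, (i <= rho)%N -> (j <= rho)%N -> in_Ci C i v ->
        nb_count C v j = alpha i j) /\
    (forall i j, (i <= rho)%N -> (j <= rho)%N -> (j.+1 < i \/ i.+1 < j)%N ->
        alpha i j = 0%N).

Definition all_ones_CRC d (C : pt d -> Prop) (rho : nat) : Prop :=
  is_CRC C rho /\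
  forall i v, (i <= rho)%N -> in_Ci C i v -> nb_count C v i = 1%N.

(* Dimension n.+1: the last coordinate is ord_max *)
Definition zero_pt n : pt n.+1 := fun _ => 0.
Definition minus_en n : pt n.+1 := fun k => if k == ord_max then -1 else 0.

Definition shift_n n (x : pt n.+1) (t : int) : pt n.+1 :=
  fun k => if k == ord_max then x k + t else x k.

Definition set_last n (x : pt n.+1) (m : int) : pt n.+1 :=
  fun k => if k == ord_max then m else x k.

Definition pair_in n (C : pt n.+1 -> Prop) (j : nat) (x : pt n.+1) (s : int) : Prop :=
  in_Ci C j (set_last x (2 * s)) /\ in_Ci C j (set_last x (2 * s - 1)).

From Stdlib Require Import FunctionalExtensionality ClassicalEpsilon.
From mathcomp Require Import all_boot all_order all_algebra zify.
Set Implicit Arguments. Unset Strict Implicit. Unset Printing Implicit Defensive.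
Import Order.TTheory GRing.Theory Num.Theory.
Local Open Scope ring_scope.

(** Let [f v = d(v, C)].  For an all-ones CRC, [f] changes by at most one
    along edges, every vertex has exactly one neighbour ("partner") in its own
    layer, and the number of neighbours in a given layer depends only on the
    layer.  If [v] and [v ± e_k] are partners, then so are their translates in
    any other direction [j]: the four values around the square through the two
    pairs differ by one from the common value, hence agree by parity.  Starting
    from the partners [0] and [-e_n], this propagates the pairing [{x, x-e_n}]
    to the whole slice [x_n = 0], and a uniqueness argument moves it from
    slice to slice.  Comparing the neighbour counts of the two members of a
    slice pair then gives [f(x+e_n) = f(x-2e_n)], which forces period [4]
    along every [n]-line. *)

Lemma int_ind_step (P : int -> Prop) : P 0 -> (forall s, P s -> P (s + 1)) ->
  (forall s, P s -> P (s - 1)) -> forall s, P s.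
Proof.
move=> P0 Pup Pdn [m|m].
  by elim: m => [|m IH] //; have := Pup _ IH; congr P; lia.
elim: m => [|m IH]; first by have := Pdn _ P0; congr P.
by have := Pdn _ IH; congr P; lia.
Qed.

Lemma int_even_or_odd (m : int) : exists s : int, m = 2 * s \/ m = 2 * s - 1.
Proof.
exists ((m + 1) %/ 2)%Z; have := divz_eq (m + 1) 2.
have := modz_ge0 (m + 1) (isT : (2 : int) != 0).
have := ltz_mod (m + 1) (isT : (2 : int) != 0); lia.
Qed.

Lemma alternating_seq (c : int -> nat) :
  (forall s, c (s + 2) = c s) ->
  (forall s, c (s + 1) = (c s).+1 \/ c s = (c (s + 1)).+1) ->
  exists i, forall s,
    (c s = i /\ c (s + 1) = i.+1) \/ (c s = i.+1 /\ c (s + 1) = i).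
Proof.
move=> c2 c1; exists (minn (c 0) (c 1)); elim/int_ind_step => [|s IH|s IH].
- by have := c1 0; rewrite !add0r; move: (c 0) (c 1) => a b; lia.
- rewrite -addrA (_ : 1 + 1 = 2) // c2; move: IH.
  by move: (c s) (c (s + 1)) => a b; lia.
- rewrite subrK -(c2 (s - 1)) -addrA (_ : -1 + 2 = 1) //; move: IH.
  by move: (c s) (c (s + 1)) => a b; lia.
Qed.

Lemma nbrK d (v : pt d) k b : nbr (nbr v (k, b)) (k, ~~ b) = v.
Proof.
apply: functional_extensionality => i; rewrite /nbr /=.
by case: (i == k); case: b => /=; lia.
Qed.

Lemma nbrC d (v : pt d) k b k' b' : k != k' ->
  nbr (nbr v (k, b)) (k', b') = nbr (nbr v (k', b')) (k, b).
Proof.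
move=> kk'; apply: functional_extensionality => i; rewrite /nbr /=.
by have [->|//] := eqVneq i k; rewrite (negbTE kk').
Qed.

Lemma horizontal_ind d (e : 'I_d) (P : pt d -> Prop) :
  P (fun _ => 0) -> (forall v j c, j != e -> P v -> P (nbr v (j, c))) ->
  forall x, x e = 0 -> P x.
Proof.
move=> P0 Pstep x; have [N] := ubnP (\sum_k `|x k|)%N.
elim: N x => // N IH x ltN xe.
case: (pickP (fun k => x k != 0)) => [k xk|x0]; last first.
  suff -> : x = (fun _ => 0) by [].
  by apply: functional_extensionality => k; apply/eqP/negbFE/x0.
have ke : k != e by apply: contraNneq xk => ->; rewrite xe.
set y := nbr x (k, x k < 0).
have -> : x = nbr y (k, ~~ (x k < 0)) by rewrite nbrK.
apply: (Pstep _ _ _ ke); apply: IH; last by rewrite /y /nbr /= eq_sym (negbTE ke).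
rewrite (bigD1 k) //= in ltN; rewrite (bigD1 k) //=.
rewrite (eq_bigr (fun i => `|x i|%N)) => [|i ik]; last by rewrite /y /nbr /= (negbTE ik).
by rewrite /y /nbr /= eqxx; move: ltN xk; case: ifP; lia.
Qed.

Definition layering d (f : pt d -> nat) : Prop :=
  [/\ forall v p, (f (nbr v p) <= (f v).+1)%N,
      forall v, #|[pred p | f (nbr v p) == f v]| = 1%N &
      forall u v j, f u = f v ->
        #|[pred p | f (nbr u p) == j]| = #|[pred p | f (nbr v p) == j]|].

Section Layering.
Variables (d : nat) (f : pt d -> nat).
Hypothesis f_layering : layering f.

Lemma layering_lipschitz v p : (f (nbr v p) <= (f v).+1)%N.
Proof. by case: f_layering. Qed.

Lemma layering_lipschitz_sym v p : (f v <= (f (nbr v p)).+1)%N.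
Proof. by case: p => k b; have := layering_lipschitz (nbr v (k, b)) (k, ~~ b); rewrite nbrK. Qed.

Lemma partner_uniq v p q : f (nbr v p) = f v -> f (nbr v q) = f v -> p = q.
Proof.
case: f_layering => _ one _ fp fq; have [r Hr] := mem_card1 (one v).
by have := Hr p; have := Hr q; rewrite !inE fp fq eqxx => /esym/eqP -> /esym/eqP ->.
Qed.

Lemma partner_exists v : exists p, f (nbr v p) = f v.
Proof.
case: f_layering => _ one _; have [r Hr] := mem_card1 (one v).
by exists r; have := Hr r; rewrite !inE eqxx => /eqP.
Qed.

Lemma partner_nbr v k b j c : k != j -> f (nbr v (k, b)) = f v ->
  f (nbr (nbr v (j, c)) (k, b)) = f (nbr v (j, c)).
Proof.
move=> kj fu; set w := nbr v (j, c); set u := nbr v (k, b).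
have Ew : nbr w (k, b) = nbr u (j, c) by rewrite /w /u nbrC // eq_sym.
have fw : f w != f v.
  by apply/eqP => /(partner_uniq fu) [jk]; rewrite jk eqxx in kj.
have fw' : f (nbr u (j, c)) != f u.
  apply/eqP => fw'; have fv : f (nbr u (k, ~~ b)) = f u by rewrite nbrK.
  by have [jk _] := partner_uniq fw' fv; rewrite jk eqxx in kj.
(* [f w] and [f (nbr u (j, c))] both differ from [f v] by exactly one and
   from each other by at most one, so they are equal *)
rewrite Ew; move: fw fw'; rewrite fu.
have := layering_lipschitz_sym v (j, c); have := layering_lipschitz v (j, c).
have := layering_lipschitz_sym u (j, c); have := layering_lipschitz u (j, c).
have := layering_lipschitz_sym w (k, b); have := layering_lipschitz w (k, b).
by rewrite Ew -/w fu; lia.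
Qed.

Variable e : 'I_d.

Definition paired_down v := f (nbr v (e, false)) = f v.

Lemma paired_down_nbr v j c : j != e -> paired_down v -> paired_down (nbr v (j, c)).
Proof. by move=> je pv; apply: partner_nbr; rewrite // eq_sym. Qed.

Lemma paired_down_up2 v :
  paired_down (nbr (nbr v (e, false)) (e, false)) -> paired_down v.
Proof.
set y := nbr v (e, false); set z := nbr y (e, false) => pz.
have [[k b] fy] := partner_exists y.
have [ke|ke] := eqVneq k e.
  subst k; case: b fy => [|fy]; first by rewrite /y nbrK /paired_down => ->.
  have fz : f (nbr z (e, true)) = f z by rewrite /z nbrK.
  by have := partner_uniq fz pz.
have := partner_nbr false ke fy; rewrite -/z => fz.
by have [ek] := partner_uniq fz pz; rewrite ek eqxx in ke.
Qed.

Lemma paired_down_down2 v :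
  paired_down (nbr (nbr v (e, true)) (e, true)) -> paired_down v.
Proof.
set y := nbr v (e, true) => /= pu.
have fy : f (nbr y (e, true)) = f y by move: pu; rewrite /paired_down nbrK.
have [[k b] fv] := partner_exists v.
have [ke|ke] := eqVneq k e.
  subst k; case: b fv => [fv|//].
  have fy' : f (nbr y (e, false)) = f y by rewrite /y nbrK.
  by have := partner_uniq fy' fy.
have := partner_nbr true ke fv; rewrite -/y => fy'.
by have [ek] := partner_uniq fy' fy; rewrite ek eqxx in ke.
Qed.

Lemma paired_down_even : paired_down (fun _ => 0) ->
  forall x s, x e = 2 * s -> paired_down x.
Proof.
move=> p0 x s; elim/int_ind_step: s x => [|s IH|s IH] x xe.
- by apply: horizontal_ind xe => // v j c; apply: paired_down_nbr.
- by apply/paired_down_up2/IH; rewrite /nbr /= eqxx xe; lia.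
- by apply/paired_down_down2/IH; rewrite /nbr /= eqxx xe; lia.
Qed.

(* The two members of a slice pair have the same neighbour counts; their
   neighbours off the [e]-line are partners, so the two remaining vertical
   neighbours must lie in the same layer. *)
Lemma paired_down_opposite v : paired_down v ->
  f (nbr v (e, true)) = f (nbr (nbr v (e, false)) (e, false)).
Proof.
move=> pv; set w := nbr v (e, false); set j := f (nbr v (e, true)).
have fj : (f v == j) = false.
  by apply/eqP => fvj; have := partner_uniq (esym fvj) pv.
have [_ _ regular] := f_layering.
have := regular v w j (esym pv).
rewrite (cardD1 (e, true)) (cardD1 (e, false)).
rewrite [in X in _ = X](cardD1 (e, true)) [in X in _ = X](cardD1 (e, false)).
have Ew : nbr w (e, true) = v by rewrite /w nbrK.
have tf : ((e, false) != (e, true) :> 'I_d * bool) by apply/negP => /eqP [].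
rewrite !inE /= Ew eqxx -/w pv fj tf andbF /=.
have -> : #|[predD1 [predD1 [pred p | f (nbr w p) == j] & (e, true)] & (e, false)]|
  = #|[predD1 [predD1 [pred p | f (nbr v p) == j] & (e, true)] & (e, false)]|.
  apply: eq_card => -[k b]; rewrite !inE /=.
  have [->|ke] := eqVneq k e; first by case: b; rewrite eqxx /= ?andbF.
  have ek : e != k by rewrite eq_sym.
  by rewrite /w nbrC // (partner_nbr b ek pv).
by case: (f (nbr w (e, false)) =P j) => [//|_]; rewrite !add0n add1n; lia.
Qed.

End Layering.

Lemma nbr_set_last_up n (x : pt n.+1) m :
  nbr (set_last x m) (ord_max, true) = set_last x (m + 1).
Proof.
by apply: functional_extensionality => k; rewrite /nbr /set_last /=; case: (k == ord_max).
Qed.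

Lemma nbr_set_last_down n (x : pt n.+1) m :
  nbr (set_last x m) (ord_max, false) = set_last x (m - 1).
Proof.
by apply: functional_extensionality => k; rewrite /nbr /set_last /=; case: (k == ord_max).
Qed.

Lemma shift_n_set_last n (x : pt n.+1) t : shift_n x t = set_last x (x ord_max + t).
Proof.
apply: functional_extensionality => k; rewrite /shift_n /set_last.
by have [->|] := eqVneq k ord_max.
Qed.

Lemma shift_n_down n (x : pt n.+1) : shift_n x (-1) = nbr x (ord_max, false).
Proof.
by apply: functional_extensionality => k; rewrite /shift_n /nbr /=; case: (k == ord_max).
Qed.

Section Line.
Variables (n : nat) (f : pt n.+1 -> nat).
Hypothesis f_layering : layering f.
Hypothesis paired0 : paired_down f ord_max (fun _ => 0).
Variable x : pt n.+1.

Let g m := f (set_last x m).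

Let paired_slice s : paired_down f ord_max (set_last x (2 * s)).
Proof. by apply: (paired_down_even f_layering paired0 (s := s)); rewrite /set_last eqxx. Qed.

Lemma line_pair s : g (2 * s - 1) = g (2 * s).
Proof. by have := paired_slice s; rewrite /paired_down nbr_set_last_down. Qed.

Lemma line_step s :
  g (2 * (s + 1)) = (g (2 * s)).+1 \/ g (2 * s) = (g (2 * (s + 1))).+1.
Proof.
have -> : g (2 * (s + 1)) = g (2 * s + 1).
  by rewrite -line_pair; congr g; lia.
have ne : g (2 * s + 1) != g (2 * s).
  apply/eqP => up; rewrite /g -nbr_set_last_up in up.
  by have := partner_uniq f_layering up (paired_slice s).
have := layering_lipschitz f_layering (set_last x (2 * s)) (ord_max, true).
have := layering_lipschitz_sym f_layering (set_last x (2 * s)) (ord_max, true).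
rewrite nbr_set_last_up; move: ne; rewrite /g.
by move: (f _) (f (set_last x (2 * s))) => a b; lia.
Qed.

Lemma line_period m : g (m + 4) = g m.
Proof.
have even s : g (2 * s + 4) = g (2 * s).
  have := paired_down_opposite f_layering (paired_slice (s + 1)).
  rewrite nbr_set_last_up !nbr_set_last_down -/(g _) -/(g _).
  have -> : 2 * (s + 1) + 1 = 2 * (s + 2) - 1 by lia.
  have -> : 2 * (s + 1) - 1 - 1 = 2 * s by lia.
  by rewrite line_pair; have -> : 2 * (s + 2) = 2 * s + 4 by lia.
have [s [->|->]] := int_even_or_odd m; first exact: even.
rewrite line_pair -(even s) (_ : 2 * s - 1 + 4 = 2 * (s + 2) - 1); last by lia.
by rewrite line_pair; congr g; lia.
Qed.

Lemma line_alternates : exists i, forall s,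
  (g (2 * s) = i /\ g (2 * (s + 1)) = i.+1) \/
  (g (2 * s) = i.+1 /\ g (2 * (s + 1)) = i).
Proof.
apply: (alternating_seq (c := fun s => g (2 * s))) => [s|]; last exact: line_step.
by rewrite -(line_period (2 * s)); congr g; lia.
Qed.

End Line.

Lemma dist_self d (c : pt d) : dist c c = 0%N.
Proof. by rewrite /dist big1 // => i _; rewrite subrr. Qed.

Lemma dist_nbr d (v c : pt d) p : (dist (nbr v p) c <= (dist v c).+1)%N.
Proof.
case: p => k b; rewrite /dist (bigD1 k) // [X in (_ <= X.+1)%N](bigD1 k) //=.
rewrite (eq_bigr (fun i => `|v i - c i|%N)) => [|i ik]; last by rewrite /nbr /= (negbTE ik).
by rewrite /nbr /= eqxx; case: b; lia.
Qed.

Lemma in_Ci_uniq d (C : pt d -> Prop) i j v : in_Ci C i v -> in_Ci C j v -> i = j.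
Proof.
move=> [[c [Cc dc]] le_i] [[c' [Cc' dc']] le_j].
by have := le_i c' Cc'; have := le_j c Cc; rewrite dc dc'; lia.
Qed.

Lemma covering_radius_cover d (C : pt d -> Prop) rho :
  covering_radius C rho -> forall v, exists i, in_Ci C i v.
Proof. by move=> [cov _] v; have [i [_ ?]] := cov v; exists i. Qed.

Section Layer.
Variables (d : nat) (C : pt d -> Prop).
Variable cover : forall v, exists i, in_Ci C i v.

Definition layer v : nat := proj1_sig (constructive_indefinite_description _ (cover v)).

Lemma in_Ci_layer v i : in_Ci C i v <-> layer v = i.
Proof.
have Cv := proj2_sig (constructive_indefinite_description _ (cover v)).
by split=> [Ci|<- //]; apply: in_Ci_uniq Cv Ci.
Qed.

Lemma layerP v : in_Ci C (layer v) v.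
Proof. exact/in_Ci_layer. Qed.

Lemma layer_code c : C c -> layer c = 0%N.
Proof. by move=> Cc; apply/in_Ci_layer; split=> //; exists c; rewrite dist_self. Qed.

Lemma layer_nbr_le v p : (layer (nbr v p) <= (layer v).+1)%N.
Proof.
have [[c [Cc dc]] _] := layerP v; have [_ le_c] := layerP (nbr v p).
by have := le_c c Cc; have := dist_nbr v c p; rewrite dc; lia.
Qed.

Lemma nb_count_layer v j : nb_count C v j = #|[pred p | layer (nbr v p) == j]|.
Proof.
apply: eq_card => p; rewrite !inE /pb.
case: excluded_middle_informative => [/in_Ci_layer -> | nCi] /=; first by rewrite eqxx.
by apply/esym/eqP => /in_Ci_layer.
Qed.

Lemma layer_le_rho rho : covering_radius C rho -> forall v, (layer v <= rho)%N.
Proof. by move=> [cov _] v; have [i [le_i /in_Ci_layer ->]] := cov v. Qed.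

Lemma all_ones_CRC_layering rho : all_ones_CRC C rho -> layering layer.
Proof.
move=> [[crad [alpha [alphaE _]]] ones]; have le_rho := layer_le_rho crad.
split=> [|v|u v j uv]; first exact: layer_nbr_le.
  by rewrite -nb_count_layer; apply: ones (layerP v).
rewrite -!nb_count_layer; have [le_j|lt_j] := leqP j rho.
  by rewrite (alphaE _ _ _ (le_rho u) le_j (layerP u)) uv (alphaE _ _ _ _ le_j (layerP v)).
have none w : nb_count C w j = 0%N.
  rewrite nb_count_layer; apply: eq_card0 => p; rewrite !inE.
  by apply/negbTE/eqP => wj; have := le_rho (nbr w p); rewrite wj; lia.
by rewrite !none.
Qed.

End Layer.

Theorem mainTheorem8 (n : nat) (C : pt n.+1 -> Prop) (rho : nat) :
  all_ones_CRC C rho -> C (@zero_pt n) -> C (@minus_en n) ->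
  (forall (x : pt n.+1) (s : int), x ord_max = 2 * s ->
     exists i, (i <= rho)%N /\ in_Ci C i x /\ in_Ci C i (shift_n x (-1))) /\
  (forall (x : pt n.+1) (i : nat),
     (exists t : int, in_Ci C i (shift_n x t)) ->
     (forall t : int, in_Ci C i (shift_n x t) ->
        in_Ci C i (shift_n x (t + 4)) /\ in_Ci C i (shift_n x (t - 4))) /\
     (forall m s : int, in_Ci C i (set_last x m) ->
        (m = 2 * s -> in_Ci C i (set_last x (2 * s - 1))) /\
        (m = 2 * s - 1 -> in_Ci C i (set_last x (2 * s))))) /\
  (forall x : pt n.+1, exists i, (i < rho)%N /\
     forall s : int,
       (pair_in C i x s /\ pair_in C i.+1 x (s + 1)) \/
       (pair_in C i.+1 x s /\ pair_in C i x (s + 1))).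
Proof.
move=> HC C0 Cm; have crad := proj1 (proj1 HC).
have cover := covering_radius_cover crad.
have layerE := in_Ci_layer cover; have layer_le := layer_le_rho cover crad.
have lay := all_ones_CRC_layering cover HC.
have p0 : paired_down (layer cover) ord_max (fun _ => 0).
  have down0 : nbr (fun _ => 0) (ord_max, false) = @minus_en n.
    by apply: functional_extensionality => k; rewrite /nbr /minus_en /=; case: (k == ord_max).
  by rewrite /paired_down down0 !layer_code.
split; [|split].
- move=> x s xe; exists (layer cover x); rewrite layer_le !layerE shift_n_down.
  by split=> //; split=> //; exact: (paired_down_even lay p0 xe).
- move=> x i _; split=> [t|m s]; rewrite ?shift_n_set_last !layerE => <-.
    rewrite addrA line_period // -(line_period lay p0 x (x ord_max + (t - 4))).
    by split=> //; congr (layer cover (set_last x _)); lia.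
  by split=> ->; rewrite line_pair.
- move=> x; have [i alt] := line_alternates lay p0 x.
  have pairE j t : layer cover (set_last x (2 * t)) = j -> pair_in C j x t.
    by move=> ft; split; apply/layerE; rewrite ?line_pair.
  exists i; split; first by case: (alt 0) => [[_ <-]|[<- _]]; apply: layer_le.
  by move=> s; case: (alt s) => -[/pairE ? /pairE ?]; [left|right].
Qed.
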